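(* Let $k\ge 2$ and let $G$ be a graph with no cycle of length $2k+1$. Let $V(G)=V_1\cup V_2\cup V_3$ be a partition into three parts. Let $G'$ be the graph on $V(G)$ whose edges are those edges of $G$ that lie in some triangle of $G$ having exactly one vertex in each of $V_1,V_2,V_3$. For $1\le i<j\le 3$ let $G_{ij}$ be the bipartite subgraph of $G'$ consisting of the edges of $G'$ with one end in $V_i$ and the other in $V_j$. Then each $G_{ij}$ contains no cycle of length $2k$.
   Context: All graphs are simple; a cycle of length $m$ is a (not necessarily induced) subgraph isomorphic to $C_m$. *)

From mathcomp Require Import all_boot.
Set Implicit Arguments. Unset Strict Implicit. Unset Printing Implicit Defensive.

Definition simple_graph (T : finType) (e : rel T) : Prop :=
  symmetric e /\ irreflexive e.


Definition has_cycle (T : finType) (e : rel T) (m : nat) : Prop :=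
  (3 <= m)%N /\
  exists f : nat -> T,
    {in [pred i | (i < m)%N] &, injective f} /\
    forall i : nat, (i < m)%N -> e (f i) (f ((i.+1) %% m)).

Definition Gprime (T : finType) (e : rel T) (part : T -> 'I_3) : rel T :=
  fun x y => e x y &&
    [exists z : T, [&& e x z, e y z,
                       part x != part y, part y != part z & part x != part z]].

Definition Gij (T : finType) (e : rel T) (part : T -> 'I_3) (i j : 'I_3) : rel T :=
  fun x y => Gprime e part x y &&
    (((part x == i) && (part y == j)) || ((part x == j) && (part y == i))).

From mathcomp Require Import all_boot.
From mathcomp Require Import zify.

Set Implicit Arguments.
Unset Strict Implicit.

(* Every edge of [G_ij] lies in a triangle whose apex lies in the third part,
   hence off every cycle of [G_ij]; inserting the apex between the endpoints
   of one cycle edge turns a [2k]-cycle of [G_ij] into a [(2k+1)]-cycle of [G]. *)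

Section InsertVertex.

Variables (T : finType) (e : rel T) (m : nat) (f : nat -> T) (z : T).

(* [0.-1 = 0], so index [0] is kept and the indices from [2] on are shifted. *)
Definition insert_vertex (n : nat) : T := if n == 1 then z else f n.-1.

Hypothesis m_ge2 : (2 <= m)%N.
Hypothesis f_inj : {in [pred i | (i < m)%N] &, injective f}.
Hypothesis f_edge : forall i, (i < m)%N -> e (f i) (f (i.+1 %% m)).
Hypothesis z_off : forall i, (i < m)%N -> f i != z.
Hypotheses (e_f0z : e (f 0) z) (e_zf1 : e z (f 1)).

Lemma insert_vertex_inj :
  {in [pred i | (i < m.+1)%N] &, injective insert_vertex}.
Proof.
move=> a b; rewrite !inE /insert_vertex => ha hb.
have ha' : (a.-1 < m)%N by lia.
have hb' : (b.-1 < m)%N by lia.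
case: eqP => [-> | a1]; case: eqP => [-> | b1] //.
- by move=> zf; move: (z_off hb'); rewrite zf eqxx.
- by move=> fz; move: (z_off ha'); rewrite fz eqxx.
by move=> /f_inj; rewrite !inE => /(_ ha' hb'); lia.
Qed.

Lemma insert_vertex_succ t : (t.+1 < m)%N ->
  insert_vertex (t.+3 %% m.+1) = f (t.+2 %% m).
Proof.
move=> ht; have [lt | ge] := ltnP t.+2 m.
  by rewrite !modn_small.
have -> : t.+2 = m by lia.
by rewrite !modnn.
Qed.

Lemma has_cycle_insert_vertex : has_cycle e m.+1.
Proof.
split; first lia.
exists insert_vertex; split; first exact: insert_vertex_inj.
case=> [|[|t]] ht.
- by rewrite modn_small /insert_vertex //; lia.
- by rewrite modn_small /insert_vertex //; lia.
rewrite insert_vertex_succ; last lia.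
exact: f_edge.
Qed.

End InsertVertex.

Section Gij.

Variables (T : finType) (e : rel T) (part : T -> 'I_3) (i j : 'I_3).

Lemma Gij_edge x y : Gij e part i j x y -> e x y.
Proof. by case/andP=> /andP[]. Qed.

Lemma Gij_part x y : Gij e part i j x y -> (part x == i) || (part x == j).
Proof. by case/andP=> _ /orP[] /andP[-> _]; rewrite ?orbT. Qed.

Lemma Gij_apex x y : Gij e part i j x y ->
  exists z, [/\ e x z, e y z, part z != i & part z != j].
Proof.
case/andP=> /andP[_ /existsP[z /and5P[exz eyz _ nyz nxz]]] pxy.
exists z; split=> //;
  by case/orP: pxy => /andP[/eqP px /eqP py]; rewrite -?px -?py eq_sym.
Qed.

End Gij.

Theorem mainTheorem4 (k : nat) (T : finType) (e : rel T) (part : T -> 'I_3) :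
  (2 <= k)%N ->
  simple_graph e ->
  ~ has_cycle e (2 * k + 1) ->
  forall i j : 'I_3, (i < j)%N -> ~ has_cycle (Gij e part i j) (2 * k).
Proof.
move=> _ [symE _] nocyc i j _ [m_ge3 [f [f_inj f_edge]]].
have m_gt0 : (0 < 2 * k)%N by lia.
have [z [e0z e1z zi zj]] := Gij_apex (f_edge 0 m_gt0).
apply: nocyc; rewrite addn1.
apply: (has_cycle_insert_vertex (f := f) (z := z)) => //.
- exact: ltnW.
- by move=> t /f_edge /Gij_edge.
- move=> t /f_edge /Gij_part /orP[] /eqP pt; apply/eqP=> ft;
    [move: zi | move: zj]; by rewrite -ft pt eqxx.
- by rewrite symE; move: e1z; rewrite modn_small // ltnW.
Qed.
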